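(* Assume $\mu_1=\mu_2=\mu_3=1$. For any decision points, every point of every periodic orbit of the triangle process lies in ${}^VA$.
   Context: Fix $\rho_1,\rho_2,\rho_3\in(0,1)$ with $\rho_1+\rho_2+\rho_3>1$, $\lambda_i=\rho_i$, $\mu_i=1$, $\theta:=\rho_1+\rho_2+\rho_3-1$. $A_i^0:=\{y\in\mathbb R^3: y_1+y_2+y_3=1, y_i=0, y_l\ge0\}$, $A^0:=\bigcup_iA_i^0$. For $z\in A^0\setminus A_j^0$, $f_j(z):=\sum_{i\neq j}\frac{(1-\rho_j)z_i+\rho_i z_j}{(1-\rho_j)+\theta z_j}e_i$. For $(\hat i,\hat j,\hat k)$ equal to $(1,2,3)$ or a cyclic permutation, $(1-x)e_{\hat j}+xe_{\hat k}\in A^0_{\hat i}$ is written $(x,\hat i)$. ${}^VA_{\hat i}:=\{(x,\hat i):\max(0,1-\rho_{\hat j}/\theta)\le x\le\min(1,\rho_{\hat k}/\theta)\}$, ${}^VA:=\bigcup_{\hat i}{}^VA_{\hat i}$. Decision points $d_1,d_2,d_3\in(0,1)$; switching rule $\mathfrak R((x,\hat i))=\hat j$ if $x<d_{\hat i}$, $\hat k$ if $x>d_{\hat i}$, both allowed if $x=d_{\hat i}$; $\varphi(z):=f_{\mathfrak R(z)}(z)$ (two-valued at decision points). A periodic orbit is $u_1,\dots,u_m\in A^0$ with $u_{n+1}\in\varphi(u_n)$ for $n<m$ and $u_1\in\varphi(u_m)$. *)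

From Stdlib Require Import Reals.
Open Scope R_scope.

Inductive idx := I1 | I2 | I3.

Definition idx_eqb (a b : idx) : bool :=
  match a, b with
  | I1, I1 | I2, I2 | I3, I3 => true
  | _, _ => false
  end.

(* cyclic successor: 1 -> 2 -> 3 -> 1.  For a hat-index i, the cyclic
   triple (i, j, k) is (i, nxt i, nxt (nxt i)). *)
Definition nxt (i : idx) : idx :=
  match i with I1 => I2 | I2 => I3 | I3 => I1 end.

Record pt := mkpt { p1 : R; p2 : R; p3 : R }.

Definition coord (p : pt) (i : idx) : R :=
  match i with I1 => p1 p | I2 => p2 p | I3 => p3 p end.

Definition pt_of (g : idx -> R) : pt := mkpt (g I1) (g I2) (g I3).

Definition theta (rho : idx -> R) : R := rho I1 + rho I2 + rho I3 - 1.

Definition A0i (i : idx) (y : pt) : Prop :=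
  coord y I1 + coord y I2 + coord y I3 = 1 /\ coord y i = 0 /\
  (forall l, 0 <= coord y l).

Definition A0 (y : pt) : Prop := exists i, A0i i y.

(* f_j(z) = sum_{i <> j} ((1-rho_j) z_i + rho_i z_j)/((1-rho_j) + theta z_j) e_i
   (used only for z in A^0 \ A_j^0). *)
Definition f (rho : idx -> R) (j : idx) (z : pt) : pt :=
  pt_of (fun i => if idx_eqb i j then 0 else
    ((1 - rho j) * coord z i + rho i * coord z j) /
    ((1 - rho j) + theta rho * coord z j)).

(* (x, i) := (1 - x) e_j + x e_k  for the cyclic triple (i, j, k). *)
Definition xpt (x : R) (i : idx) : pt :=
  pt_of (fun l => if idx_eqb l (nxt i) then 1 - x
                  else if idx_eqb l (nxt (nxt i)) then x else 0).

Definition VAi (rho : idx -> R) (i : idx) (p : pt) : Prop :=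
  exists x, p = xpt x i /\
    Rmax 0 (1 - rho (nxt i) / theta rho) <= x /\
    x <= Rmin 1 (rho (nxt (nxt i)) / theta rho).

Definition VA (rho : idx -> R) (p : pt) : Prop := exists i, VAi rho i p.

(* Switching rule R (as a relation: z may switch to queue j);
   two-valued exactly at decision points. *)
Definition switch_rule (d : idx -> R) (z : pt) (j : idx) : Prop :=
  exists i x, 0 <= x <= 1 /\ z = xpt x i /\
    ((x < d i /\ j = nxt i) \/
     (x > d i /\ j = nxt (nxt i)) \/
     (x = d i /\ (j = nxt i \/ j = nxt (nxt i)))).

(* w \in phi(z), phi(z) = f_{R(z)}(z) *)
Definition phi (rho d : idx -> R) (z w : pt) : Prop :=
  exists j, switch_rule d z j /\ A0 z /\ ~ A0i j z /\ w = f rho j z.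

(* Periodic orbit u_0, ..., u_{m-1} (0-based) in A^0. *)
Definition periodic_orbit (rho d : idx -> R) (m : nat) (u : nat -> pt) : Prop :=
  (1 <= m)%nat /\
  (forall n : nat, (n < m)%nat -> A0 (u n)) /\
  (forall n : nat, (n + 1 < m)%nat -> phi rho d (u n) (u (n + 1)%nat)) /\
  phi rho d (u (m - 1)%nat) (u O).

(* Measure how far a point exceeds the vertical region by the excess
   [theta p_l - rho_l] of each coordinate; ^VA is exactly the set of points of
   the edges of A^0 where all three excesses are nonpositive.  For [l <> j] the
   map f_j multiplies the excess of coordinate l by (1 - rho_j)/(1 - rho_j +
   theta z_j) < 1 and sets the excess of coordinate j to -rho_j < 0, so a
   positive excess strictly decreases at every step.  Around a periodic orbit
   it would have to decrease back to itself, hence all excesses are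
   nonpositive along the orbit, and every orbit point, being an image under
   some f_j, lies on an edge of A^0 and therefore in ^VA. *)

From Pilot Require Import Defs.
From Stdlib Require Import Reals Lra Lia Psatz.
Open Scope R_scope.

Definition excess (rho : idx -> R) (l : idx) (p : pt) : R :=
  theta rho * coord p l - rho l.

(* Qualified because the Reals library also exports a constant [f]. *)
Lemma coord_f rho j z l : coord (Defs.f rho j z) l =
  if idx_eqb l j then 0 else
    ((1 - rho j) * coord z l + rho l * coord z j) /
    ((1 - rho j) + theta rho * coord z j).
Proof. destruct l; reflexivity. Qed.

Lemma idx_eqb_refl l : idx_eqb l l = true.
Proof. destruct l; reflexivity. Qed.

Lemma idx_eqb_nxt j : idx_eqb (nxt j) j = false.
Proof. destruct j; reflexivity. Qed.

Lemma idx_eqb_nxt_nxt j : idx_eqb (nxt (nxt j)) j = false.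
Proof. destruct j; reflexivity. Qed.

Lemma coord_sum_cyclic (p : pt) j :
  coord p I1 + coord p I2 + coord p I3 =
  coord p j + coord p (nxt j) + coord p (nxt (nxt j)).
Proof. destruct j; simpl; ring. Qed.

Lemma theta_cyclic rho j :
  theta rho = rho j + rho (nxt j) + rho (nxt (nxt j)) - 1.
Proof. destruct j; unfold theta; simpl; ring. Qed.

Lemma cycle_nonpos (m : nat) (g : nat -> R) :
  (1 <= m)%nat ->
  (forall n, (n + 1 < m)%nat -> 0 < g (n + 1)%nat -> g (n + 1)%nat < g n) ->
  (0 < g O -> g O < g (m - 1)%nat) ->
  forall n, (n < m)%nat -> g n <= 0.
Proof.
  intros Hm Hstep Hwrap n Hn.
  assert (Hback : forall k, (k < m)%nat -> 0 < g k -> g k <= g O).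
  { induction k as [|k IH]; intros Hk Hpos; [lra|].
    replace (S k) with (k + 1)%nat in * by lia.
    pose proof (Hstep k Hk Hpos).
    pose proof (IH ltac:(lia) ltac:(lra)).
    lra. }
  destruct (Rle_dec (g n) 0) as [Hle|Hgt]; [exact Hle|].
  apply Rnot_le_lt in Hgt.
  pose proof (Hback n Hn Hgt).
  pose proof (Hwrap ltac:(lra)).
  pose proof (Hback (m - 1)%nat ltac:(lia) ltac:(lra)).
  lra.
Qed.

Lemma periodic_orbit_pred rho d m u n :
  periodic_orbit rho d m u -> (n < m)%nat -> exists p, phi rho d p (u n).
Proof.
  intros [Hm [_ [Hstep Hwrap]]] Hn.
  destruct n as [|n].
  - exists (u (m - 1)%nat); exact Hwrap.
  - exists (u n). replace (S n) with (n + 1)%nat by lia. apply Hstep; lia.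
Qed.

Section TriangleMap.

Variable rho : idx -> R.
Hypothesis Hrho : forall i, 0 < rho i < 1.
Hypothesis Hsum : rho I1 + rho I2 + rho I3 > 1.

Lemma theta_gt0 : 0 < theta rho.
Proof. unfold theta; lra. Qed.

Lemma coord_gt0_of_not_A0i z j : A0 z -> ~ A0i j z -> 0 < coord z j.
Proof.
  intros [i [Hs [_ Hnn]]] Hnot.
  destruct (Rle_lt_or_eq_dec 0 (coord z j) (Hnn j)) as [Hlt|Heq]; [exact Hlt|].
  exfalso; apply Hnot; repeat split; auto.
Qed.

Lemma f_denom_gt z j : A0 z -> ~ A0i j z ->
  1 - rho j < 1 - rho j + theta rho * coord z j.
Proof.
  intros HA Hn.
  pose proof (coord_gt0_of_not_A0i z j HA Hn).
  pose proof theta_gt0.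
  nra.
Qed.

Lemma excess_f_lt z j l : A0 z -> ~ A0i j z ->
  0 < excess rho l (Defs.f rho j z) -> excess rho l (Defs.f rho j z) < excess rho l z.
Proof.
  intros HA Hn Hpos.
  pose proof (f_denom_gt z j HA Hn) as HD.
  pose proof (Hrho j). pose proof (Hrho l).
  unfold excess in *. rewrite coord_f in *.
  destruct (idx_eqb l j); [lra|].
  set (D := 1 - rho j + theta rho * coord z j) in *.
  set (e := theta rho * (((1 - rho j) * coord z l + rho l * coord z j) / D)
            - rho l) in *.
  assert (Hscale : e * D = (1 - rho j) * (theta rho * coord z l - rho l)).
  { unfold e, D in *. field. lra. }
  assert (e * (D - (1 - rho j)) > 0) by (apply Rmult_lt_0_compat; lra).
  nra.
Qed.

Lemma f_A0i z j : A0 z -> ~ A0i j z -> A0i j (Defs.f rho j z).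
Proof.
  intros HA Hn.
  pose proof (f_denom_gt z j HA Hn) as HD.
  pose proof theta_gt0.
  pose proof (Hrho j).
  destruct HA as [i [Hs [_ Hnn]]].
  repeat split.
  - rewrite (coord_sum_cyclic _ j), !coord_f, idx_eqb_refl, idx_eqb_nxt,
      idx_eqb_nxt_nxt.
    rewrite (coord_sum_cyclic _ j) in Hs.
    rewrite (theta_cyclic rho j) in HD |- *.
    field_simplify_eq; [nra | lra].
  - rewrite coord_f, idx_eqb_refl; reflexivity.
  - intros l. pose proof (Hnn l). pose proof (Hnn j). pose proof (Hrho l).
    rewrite coord_f. destruct (idx_eqb l j); [lra|].
    unfold Rdiv; apply Rmult_le_pos; [nra | apply Rlt_le, Rinv_0_lt_compat; lra].
Qed.

Lemma VAi_of_excess_nonpos w j :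
  A0i j w -> (forall l, excess rho l w <= 0) -> VAi rho j w.
Proof.
  intros [Hs [Hj Hnn]] Hex.
  pose proof theta_gt0.
  rewrite (coord_sum_cyclic _ j) in Hs.
  pose proof (Hnn (nxt j)). pose proof (Hnn (nxt (nxt j))).
  pose proof (Hex (nxt j)). pose proof (Hex (nxt (nxt j))).
  unfold excess in *.
  exists (coord w (nxt (nxt j))). repeat split.
  - destruct w as [a b c]; destruct j; simpl in *;
      unfold xpt, pt_of; simpl; f_equal; lra.
  - apply Rmax_lub; [lra|].
    assert (rho (nxt j) / theta rho * theta rho = rho (nxt j)) by (field; lra).
    nra.
  - apply Rmin_glb; [lra|].
    assert (rho (nxt (nxt j)) / theta rho * theta rho = rho (nxt (nxt j)))
      by (field; lra).
    nra.
Qed.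

Lemma phi_excess_lt d z w l :
  phi rho d z w -> 0 < excess rho l w -> excess rho l w < excess rho l z.
Proof. intros [j [_ [HA [Hn ->]]]]; apply excess_f_lt; assumption. Qed.

Lemma phi_VA_of_excess_nonpos d z w :
  phi rho d z w -> (forall l, excess rho l w <= 0) -> VA rho w.
Proof.
  intros [j [_ [HA [Hn ->]]]] Hex.
  exists j; apply VAi_of_excess_nonpos; [apply f_A0i|]; assumption.
Qed.

End TriangleMap.

Theorem lemma4p4 (rho d : idx -> R)
  (Hrho : forall i, 0 < rho i < 1)
  (Hsum : rho I1 + rho I2 + rho I3 > 1)
  (Hd : forall i, 0 < d i < 1)
  (m : nat) (u : nat -> pt)
  (Horb : periodic_orbit rho d m u) :
  forall n : nat, (n < m)%nat -> VA rho (u n).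
Proof.
  intros n Hn.
  assert (Hexcess : forall l k, (k < m)%nat -> excess rho l (u k) <= 0).
  { intros l. destruct Horb as [Hm [_ [Hstep Hwrap]]].
    apply cycle_nonpos; [exact Hm| |].
    - intros k Hk. apply (phi_excess_lt rho Hrho Hsum d). apply Hstep, Hk.
    - apply (phi_excess_lt rho Hrho Hsum d), Hwrap. }
  destruct (periodic_orbit_pred rho d m u n Horb Hn) as [p Hp].
  apply (phi_VA_of_excess_nonpos rho Hrho Hsum d p); [exact Hp|].
  intros l; apply Hexcess, Hn.
Qed.
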